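(* Let $Q=[u_1,\dots,u_n]\subset\mathbb{S}^2$ with $n\ge 7$ be a spherical polygon not contained in any closed hemisphere, without self-intersections and antipodal intersections, with exactly two essential vertices $u_i,u_j$. Let $\tilde Q=Q-u_i-u_j$ and let $\overline{Q}=-Q$ be the antipodal polygon, with $\tilde{\overline Q}=\overline Q-\overline{u}_i-\overline{u}_j$. Then $\mathcal{H}_S(\tilde Q)\cap\mathcal{H}_S(\tilde{\overline Q})=\emptyset$.
   Context: A spherical polygon has edges the minimal great-circle arcs between consecutive vertices; no three vertices lie on a common great circle. A set is balanced if not contained in any closed hemisphere; for balanced $Q$, $u_i$ is essential if the vertex set minus $u_i$ is not balanced. Self-intersection: two non-adjacent edges intersect; antipodal intersection: non-adjacent edges $e,f$ with $e\cap(-f)\neq\emptyset$. $Q-u_i-u_j$ is the polygon obtained by deleting $u_i,u_j$ (with $u_i,u_j$ non-adjacent) and their edges and joining $u_{i-1}$ to $u_{i+1}$ and $u_{j-1}$ to $u_{j+1}$ by minimal arcs. $\mathcal{H}_S(X)$ denotes the spherical convex hull of a set $X$ contained in a closed hemisphere; $\overline u=-u$. *)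

From HB Require Import structures.
From mathcomp Require Import all_boot all_order all_algebra.
From mathcomp Require Import reals.
Set Implicit Arguments. Unset Strict Implicit. Unset Printing Implicit Defensive.
Import Order.TTheory GRing.Theory Num.Theory.
Local Open Scope ring_scope.

Section Spherical.
Variable R : realType.
Definition vec := 'rV[R]_3.

Definition dot (u v : vec) : R := (u *m v^T) 0 0.

Definition on_sphere (x : vec) : Prop := dot x x = 1.

(* the minimal great-circle arc between u and v (u, v non-antipodal):
   the points of S^2 in the cone spanned by u and v *)
Definition arc (u v : vec) : vec -> Prop :=
  fun w => on_sphere w /\ exists a b : R, 0 <= a /\ 0 <= b /\ w = a *: u + b *: v.

Definition in_closed_hemisphere (X : vec -> Prop) : Prop :=
  exists c : vec, c != 0 /\ forall x, X x -> 0 <= dot c x.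

Definition balanced (X : vec -> Prop) : Prop := ~ in_closed_hemisphere X.

Definition on_common_great_circle (a b c : vec) : Prop :=
  exists n : vec, n != 0 /\ dot n a = 0 /\ dot n b = 0 /\ dot n c = 0.

Variable n : nat.
Implicit Types (u : 'I_n -> vec) (i j k l : 'I_n).

Definition vertex_set u : vec -> Prop := fun x => exists k, x = u k.

Definition edge u k : vec -> Prop := arc (u k) (u (ordS k)).

Definition nonadjacent_edges k l : Prop :=
  k != l /\ ordS k != l /\ ordS l != k.

Definition spherical_polygon u : Prop :=
  (forall k, on_sphere (u k)) /\
  (forall a b c, a != b -> b != c -> a != c ->
     ~ on_common_great_circle (u a) (u b) (u c)).

Definition self_intersection u : Prop :=
  exists k l, nonadjacent_edges k l /\ exists x, edge u k x /\ edge u l x.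

Definition antipodal_intersection u : Prop :=
  exists k l, nonadjacent_edges k l /\ exists x, edge u k x /\ edge u l (- x).

Definition essential u i : Prop :=
  ~ balanced (fun x => exists k, k != i /\ x = u k).

Definition exactly_two_essential u i j : Prop :=
  i != j /\ essential u i /\ essential u j /\
  forall k, essential u k -> k = i \/ k = j.

Definition delete2 u i j : seq vec :=
  [seq u k | k <- enum 'I_n & (k != i) && (k != j)].

Definition antipodal_polygon u : 'I_n -> vec := fun k => - u k.

End Spherical.

Definition polygon_set (R : realType) (s : seq (vec R)) : vec R -> Prop :=
  fun x => exists k, (k < size s)%N /\
    arc (nth 0 s k) (nth 0 s ((k.+1) %% size s)) x.

Definition sph_hull (R : realType) (X : vec R -> Prop) : vec R -> Prop :=
  fun w => on_sphere w /\
    exists (m : nat) (p : 'I_m -> vec R) (lam : 'I_m -> R),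
      (forall k, X (p k)) /\ (forall k, 0 <= lam k) /\
      w = \sum_(k < m) lam k *: p k.

(* Since u_i is essential, the vertices other than u_i lie in a closed
   hemisphere {y | c.y >= 0}.  The polygon Q - u_i - u_j only uses these
   vertices, so its hull lies in the cone they span, and the hull of the
   antipodal polygon lies in the opposite cone.  At most two vertices lie on
   the boundary great circle and they are not antipodal, so a second
   functional g is positive on them: the cone is then pointed (every nonzero
   point is lexicographically positive for (c, g)), hence it cannot contain
   both x and -x for a unit vector x. *)

From Stdlib Require Import Classical.
From HB Require Import structures.
From mathcomp Require Import all_boot all_order all_algebra.
From mathcomp Require Import reals.
Set Implicit Arguments.
Unset Strict Implicit.
Unset Printing Implicit Defensive.

Import Order.TTheory GRing.Theory Num.Theory.
Local Open Scope ring_scope.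

Lemma exists_ord_neq2 n (s t : 'I_n) : (2 < n)%N -> exists r : 'I_n, (r != s) && (r != t).
Proof.
move=> n3; apply/existsP; apply: contraTT n3 => /existsPn st.
have cover : [set: 'I_n] \subset [set s; t].
  by apply/subsetP => r _; rewrite !inE; move: (st r); rewrite negb_and !negbK.
rewrite -leqNgt -(card_ord n) -cardsT (leq_trans (subset_leq_card cover)) //.
by rewrite cards2; case: (s != t).
Qed.

Section Dot.
Variable R : realType.
Implicit Types (a b c v w : vec R).

Lemma dotE a b : dot a b = \sum_k a 0 k * b 0 k.
Proof. by rewrite /dot !mxE; apply: eq_bigr => k _; rewrite mxE. Qed.

Lemma dotC a b : dot a b = dot b a.
Proof. by rewrite !dotE; apply: eq_bigr => k _; rewrite mulrC. Qed.

Lemma dotDr c v w : dot c (v + w) = dot c v + dot c w.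
Proof. by rewrite !dotE -big_split; apply: eq_bigr => k _; rewrite mxE mulrDr. Qed.

Lemma dotDl a b c : dot (a + b) c = dot a c + dot b c.
Proof. by rewrite dotC dotDr !(dotC c). Qed.

Lemma dotZr c (r : R) v : dot c (r *: v) = r * dot c v.
Proof. by rewrite !dotE mulr_sumr; apply: eq_bigr => k _; rewrite mxE mulrCA. Qed.

Lemma dot0r c : dot c 0 = 0.
Proof. by rewrite -(scale0r 0) dotZr mul0r. Qed.

Lemma dotNr c v : dot c (- v) = - dot c v.
Proof. by rewrite -scaleN1r dotZr mulN1r. Qed.

Lemma dotNl a b : dot (- a) b = - dot a b.
Proof. by rewrite dotC dotNr dotC. Qed.

Lemma dotvv_ge0 v : 0 <= dot v v.
Proof. by rewrite dotE; apply: sumr_ge0 => k _; rewrite -expr2 sqr_ge0. Qed.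

Lemma dotvv_eq0 v : (dot v v == 0) = (v == 0).
Proof.
apply/idP/eqP => [|->]; last by rewrite dot0r.
rewrite dotE psumr_eq0 => [/allP v0|k _]; last by rewrite -expr2 sqr_ge0.
apply/rowP => k; rewrite mxE.
by have := v0 k (mem_index_enum k); rewrite -expr2 sqrf_eq0 => /eqP.
Qed.

Lemma orthogonal2_exists a b : exists2 w, w != 0 & dot w a = 0 /\ dot w b = 0.
Proof.
pose A : 'M[R]_(3, 1 + 1) := row_mx a^T b^T.
have : kermx A != 0.
  rewrite -mxrank_eq0 mxrank_ker subn_eq0 -ltnNge.
  exact: leq_ltn_trans (rank_leq_col A) _.
case/rowV0Pn => w; rewrite sub_kermx /A mul_mx_row -row_mx0 => /eqP/eq_row_mx [wa wb] w0.
by exists w => //; rewrite /dot wa wb mxE.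
Qed.

End Dot.

Section Polygon.
Variable R : realType.
Implicit Types (a b : vec R).

Lemma sum_unit_dot_gt0 a b :
  on_sphere a -> on_sphere b -> a + b != 0 -> 0 < dot (a + b) a.
Proof.
move=> a1 b1 ab0.
have half : dot (a + b) (a + b) = dot (a + b) a *+ 2.
  by rewrite dotDr mulr2n; congr (_ + _); rewrite !dotDl a1 b1 dotC addrC.
by rewrite -(pmulrn_lgt0 _ (isT : (0 < 2)%N)) -half lt_def dotvv_eq0 ab0 dotvv_ge0.
Qed.

Variable n : nat.
Variable u : 'I_n -> vec R.
Hypothesis n_gt2 : (2 < n)%N.
Hypothesis poly : spherical_polygon u.

Lemma vertex_not_antipodal s t : s != t -> u s + u t != 0.
Proof.
move=> st; apply/eqP => /eqP; rewrite addr_eq0 => /eqP ust.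
have [r /andP[rs rt]] := exists_ord_neq2 s t n_gt2.
have [w w0 [ws wr]] := orthogonal2_exists (u s) (u r).
apply: (poly.2 s t r st); rewrite 1?eq_sym //.
exists w; split=> //; split=> //; split=> //.
by apply/eqP; rewrite -oppr_eq0 -dotNr -ust ws.
Qed.

(* No three vertices lie on the great circle orthogonal to c, and two vertices
   on it are not antipodal, so the sum of those vertices works for g. *)
Lemma tiebreak_exists c : c != 0 ->
  exists g, forall k, dot c (u k) = 0 -> 0 < dot g (u k).
Proof.
move=> c0.
have no3 k1 k2 k3 : k1 != k2 -> k2 != k3 -> k1 != k3 ->
    dot c (u k1) = 0 -> dot c (u k2) = 0 -> dot c (u k3) = 0 -> False.
  by move=> k12 k23 k13 ck1 ck2 ck3; apply: (poly.2 _ _ _ k12 k23 k13); exists c.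
have [[s [t [st [cs ct]]]] | not2] :=
  classic (exists s t, s != t /\ dot c (u s) = 0 /\ dot c (u t) = 0).
  exists (u s + u t) => k ck.
  have ust := vertex_not_antipodal st.
  have [-> | ks] := eqVneq k s; first exact: sum_unit_dot_gt0 (poly.1 s) (poly.1 t) ust.
  have [-> | kt] := eqVneq k t.
    by rewrite addrC; apply: sum_unit_dot_gt0 (poly.1 t) (poly.1 s) _; rewrite addrC.
  by case: (no3 s t k st _ _ cs ct ck); rewrite eq_sym.
have [[s cs] | none] := classic (exists s, dot c (u s) = 0).
  exists (u s) => k ck; have [-> | ks] := eqVneq k s; first by rewrite poly.1 ltr01.
  by case: not2; exists k, s.
by exists 0 => k ck; case: none; exists k.
Qed.

End Polygon.

Section LexOrder.
Variable R : realType.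
Variables c g : vec R.
Implicit Types (x y z : vec R).

Definition lex_nonneg y : Prop :=
  0 <= dot c y /\ (dot c y = 0 -> 0 <= dot g y /\ (dot g y = 0 -> y = 0)).

Lemma lex_nonneg0 : lex_nonneg 0.
Proof. by rewrite /lex_nonneg !dot0r. Qed.

Lemma lex_nonnegD y z : lex_nonneg y -> lex_nonneg z -> lex_nonneg (y + z).
Proof.
move=> [cy hy] [cz hz]; rewrite /lex_nonneg !dotDr; split; first exact: addr_ge0.
move=> /eqP; rewrite paddr_eq0 // => /andP[/eqP/hy[gy hgy] /eqP/hz[gz hgz]].
split; first exact: addr_ge0.
by move=> /eqP; rewrite paddr_eq0 // => /andP[/eqP/hgy-> /eqP/hgz->]; rewrite addr0.
Qed.

Lemma lex_nonnegZ (r : R) y : 0 <= r -> lex_nonneg y -> lex_nonneg (r *: y).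
Proof.
rewrite le_eqVlt => /predU1P[<- _ | r_gt0]; first by rewrite scale0r; apply: lex_nonneg0.
have r_neq0 : r != 0 by rewrite gt_eqF.
move=> [cy hy]; rewrite /lex_nonneg !dotZr !pmulr_rge0 //.
split=> // /eqP; rewrite mulf_eq0 (negPf r_neq0) => /eqP/hy[gy hgy].
split=> // /eqP; rewrite mulf_eq0 (negPf r_neq0) => /eqP/hgy->; exact: scaler0.
Qed.

Lemma lex_nonneg_sum m (lam : 'I_m -> R) (p : 'I_m -> vec R) :
  (forall k, 0 <= lam k) -> (forall k, lex_nonneg (p k)) ->
  lex_nonneg (\sum_(k < m) lam k *: p k).
Proof.
move=> lam_ge0 p_ge0; apply: big_ind => [|y z|k _]; first exact: lex_nonneg0.
  exact: lex_nonnegD.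
exact: lex_nonnegZ.
Qed.

Lemma lex_nonneg_anti y : lex_nonneg y -> lex_nonneg (- y) -> y = 0.
Proof.
move=> [cy hy] [cny hny]; rewrite dotNr oppr_ge0 in cny.
have cy0 : dot c y = 0 by apply/le_anti/andP.
have [gy hgy] := hy cy0.
have /hny[gny _] : dot c (- y) = 0 by rewrite dotNr cy0 oppr0.
by rewrite dotNr oppr_ge0 in gny; apply/hgy/le_anti/andP.
Qed.

Lemma sph_hull_lex_nonneg (X : vec R -> Prop) x :
  (forall y, X y -> lex_nonneg y) -> sph_hull X x -> lex_nonneg x.
Proof.
by move=> hX [_ [m [p [lam [Xp [lam_ge0 ->]]]]]]; apply: lex_nonneg_sum => // k; apply: hX.
Qed.

Lemma polygon_set_lex_nonneg (s : seq (vec R)) x :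
  {in s, forall y, lex_nonneg y} -> polygon_set s x -> lex_nonneg x.
Proof.
move=> hs [k [ks [_ [a [b [a_ge0 [b_ge0 ->]]]]]]].
apply: lex_nonnegD; apply: lex_nonnegZ => //; apply/hs/mem_nth => //.
by rewrite ltn_pmod // (leq_ltn_trans _ ks).
Qed.

End LexOrder.

Lemma lex_nonnegNN (R : realType) (c g y : vec R) :
  lex_nonneg c g y -> lex_nonneg (- c) (- g) (- y).
Proof.
move=> [cy hy]; rewrite /lex_nonneg !dotNl !dotNr !opprK.
by split=> // /hy[gy hgy]; split=> // /hgy->; rewrite oppr0.
Qed.

Lemma mem_delete2 (R : realType) n (f : 'I_n -> vec R) i j y :
  y \in delete2 f i j -> exists2 k, k != i & y = f k.
Proof. by case/mapP => k; rewrite mem_filter => /andP[/andP[ki _] _] ->; exists k. Qed.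

Theorem lemma12 (R : realType) (n : nat) (u : 'I_n -> vec R) (i j : 'I_n) :
  (7 <= n)%N ->
  spherical_polygon u ->
  balanced (vertex_set u) ->
  ~ self_intersection u ->
  ~ antipodal_intersection u ->
  exactly_two_essential u i j ->
  forall x : vec R,
    ~ (sph_hull (polygon_set (delete2 u i j)) x /\
       sph_hull (polygon_set (delete2 (antipodal_polygon u) i j)) x).
Proof.
move=> n_ge7 poly _ _ _ [_ [ess_i _]] x [hull hull_anti].
have [c [c0 c_ge0]] := NNPP _ ess_i.
have [g c0_g_gt0] := tiebreak_exists (leq_trans (isT : (2 < 7)%N) n_ge7) poly c0.
have vertex_ge0 k : k != i -> lex_nonneg c g (u k).
  move=> ki; split=> [|/c0_g_gt0 g_gt0]; first by apply: c_ge0; exists k.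
  by split=> [|g0]; [exact: ltW | by rewrite g0 ltxx in g_gt0].
have x_ge0 : lex_nonneg c g x.
  apply: sph_hull_lex_nonneg hull => y; apply: polygon_set_lex_nonneg.
  by move=> _ /mem_delete2[k ki ->]; apply: vertex_ge0.
have Nx_ge0 : lex_nonneg c g (- x).
  rewrite -[c]opprK -[g]opprK; apply: lex_nonnegNN.
  apply: sph_hull_lex_nonneg hull_anti => y; apply: polygon_set_lex_nonneg.
  by move=> _ /mem_delete2[k ki ->]; apply/lex_nonnegNN/vertex_ge0.
have x0 := lex_nonneg_anti x_ge0 Nx_ge0.
by have := hull.1; rewrite /on_sphere x0 dot0r => /eqP; rewrite eq_sym oner_eq0.
Qed.
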